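(* Let $k\ge 1$ and let $P_{4k+1}$ be the path with vertices labeled $1,2,\dots,4k+1$ consecutively. Then $\tau(P_{4k+1})=k$, and for each vertex $v$, writing $v=4q+r$ with $0\le r<4$, $$TDV(v)=\begin{cases}q & \text{if } v\equiv 0 \pmod 4,\\ 0 & \text{if } v\equiv 1 \pmod 4,\\ k-q & \text{if } v\equiv 2 \pmod 4,\\ k & \text{if } v\equiv 3 \pmod 4.\end{cases}$$
   Context: A set $D \subseteq V(G)$ is a total dominating set of a graph $G$ if every vertex of $G$ has a neighbor in $D$. $\gamma_t(G)$ is the minimum cardinality of a total dominating set; a minimum one is a $\gamma_t(G)$-set. $\tau(G)$ is the number of $\gamma_t(G)$-sets and $TDV(v)$ is the number of $\gamma_t(P_{4k+1})$-sets containing $v$. *)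

From mathcomp Require Import all_boot.
Set Implicit Arguments. Unset Strict Implicit. Unset Printing Implicit Defensive.

(* The path P_n on vertex type 'I_n; ordinal i stands for the vertex labelled i+1. *)
Definition path_adj (n : nat) : rel 'I_n :=
  fun i j => (i.+1 == j :> nat) || (j.+1 == i :> nat).

Definition is_tds (n : nat) (D : {set 'I_n}) : bool :=
  [forall v : 'I_n, [exists u in D, path_adj v u]].

Definition is_gt_set (n : nat) (D : {set 'I_n}) : bool :=
  is_tds D && [forall D' : {set 'I_n}, is_tds D' ==> (#|D| <= #|D'|)].

Definition tau_path (n : nat) : nat := #|[set D : {set 'I_n} | is_gt_set D]|.

Definition TDV (n : nat) (v : 'I_n) : nat :=
  #|[set D : {set 'I_n} | is_gt_set D && (v \in D)]|.

From mathcomp Require Import all_boot zify.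
Set Implicit Arguments. Unset Strict Implicit. Unset Printing Implicit Defensive.

(* Number the vertices 0, ..., 4k.  An odd vertex 2t+1 is dominated only by
   2t and 2t+2, an even vertex 2t only by 2t-1 and 2t+1.  Hence a total
   dominating set D splits into an even part meeting every consecutive pair of
   the row 0, 2, ..., 4k and an odd part meeting every consecutive pair of the
   row -1, 1, ..., 4k+1, whose two end positions are padding outside the path.
   A 0/1 row of length N+1 meeting every consecutive pair has at least
   ceil(N/2) ones, so gamma_t(P_{4k+1}) = k + (k+1).  Equality forces the even
   part to be the alternating set {4q+2} and the odd part to consist of the
   vertices 4q+1 up to some switch point m < k and the vertices 4q+3 from m
   on.  These k sets are the gamma_t-sets, and counting the m for which a
   given vertex belongs to the m-th one gives TDV. *)

Section PairCover.
Variable c : nat -> bool.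

Definition pair_cover (a N : nat) : Prop := forall t, a <= t < a + N -> c t || c t.+1.

Lemma pair_cover_sum_ge a N :
  pair_cover a N -> N.+1 %/ 2 <= \sum_(a <= s < a + N.+1) c s.
Proof.
elim/ltn_ind: N => -[|[|N]] IH cover; first exact: leq0n.
  have := cover a; rewrite addn2 (big_ltn (leqnSn a.+1)) big_nat1; clear IH; lia.
have cover_N : pair_cover a N by move=> t ht; apply: cover; clear IH; lia.
have {IH cover_N}sum_ge := IH N (ltnW (ltnSn _)) cover_N.
have := cover (a + N.+1) ltac:(lia).
have -> : a + N.+3 = (a + N.+1).+2 by rewrite !addnS.
rewrite big_nat_recr /=; last lia.
rewrite big_nat_recr /=; last lia.
lia.
Qed.

Lemma pair_cover_tight a M :
  pair_cover a M.*2 -> \sum_(a <= s < a + M.*2.+1) c s = M ->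
  forall s, a <= s <= a + M.*2 -> c s = odd (s - a).
Proof.
elim: M a => [|M IH] a cover sum_c s s_range.
  have -> : s = a by lia.
  by move: sum_c; rewrite (_ : a + _ = a.+1) ?big_nat1 ?subnn; [case: (c a) | lia].
have split_c : \sum_(a <= s < a + M.+1.*2.+1) c s =
    c a + (c a.+1 + \sum_(a.+2 <= s < a.+2 + M.*2.+1) c s).
  have -> : a + M.+1.*2.+1 = a.+2 + M.*2.+1 by lia.
  rewrite big_ltn; last lia.
  by rewrite big_ltn; last lia.
have tail_ge : M.+1 <= c a.+1 + \sum_(a.+2 <= s < a.+2 + M.*2.+1) c s.
  have cover1 : pair_cover a.+1 M.*2.+1 by move=> t ht; apply: cover; lia.
  have := pair_cover_sum_ge cover1.
  have -> : a.+1 + M.*2.+2 = a.+2 + M.*2.+1 by lia.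
  rewrite big_ltn; last lia.
  by have -> : M.*2.+2 %/ 2 = M.+1 by lia.
have c_a : c a = false by move: sum_c; rewrite split_c; case: (c a) => /=; lia.
have c_a1 : c a.+1 by have := cover a; rewrite c_a; apply; lia.
have sum_tail : \sum_(a.+2 <= s < a.+2 + M.*2.+1) c s = M.
  by move: sum_c; rewrite split_c c_a c_a1 /=; lia.
have [->|[->|s_far]] : s = a \/ s = a.+1 \/ a.+2 <= s by lia.
- by rewrite c_a subnn.
- by rewrite c_a1 subSnn.
have -> : s - a = (s - a.+2).+2 by lia.
rewrite /= negbK; apply: (IH a.+2) sum_tail _ _; last lia.
by move=> t ht; apply: cover; lia.
Qed.

Lemma pair_cover_tight_switch K :
  c 0 = false -> c K.*2.+1 = false -> pair_cover 0 K.*2.+1 ->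
  \sum_(0 <= s < K.*2.+2) c s = K.+1 ->
  exists2 M, 0 < M <= K &
    forall s, s <= K.*2.+1 -> c s = if odd s then s < M.*2 else M.*2 <= s.
Proof.
move=> c0 c_last cover sum_c.
have c_2K : c K.*2 by have := cover K.*2; rewrite c_last orbF; apply; lia.
have [M c_2M M_min] := ex_minnP (ex_intro (fun M => c M.*2) K c_2K).
have M_pos : 0 < M by case: M c_2M {M_min} => //; rewrite c0.
have M_le : M <= K := M_min K c_2K.
have even_below t : t < M -> c t.*2 = false.
  by move=> lt_tM; apply/negP => /M_min; rewrite leqNgt lt_tM.
have odd_below t : t < M -> c t.*2.+1.
  by move=> lt_tM; have := cover t.*2; rewrite even_below //; apply; lia.
have sum_below t : t <= M -> \sum_(0 <= s < t.*2) c s = t.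
  elim: t => [|t IH] le_tM; first by rewrite big_geq.
  rewrite doubleS !big_nat_recr //= IH ?even_below ?odd_below //; lia.
have sum_tail : \sum_(M.*2.+1 <= s < M.*2.+1 + (K - M).*2.+1) c s = K - M.
  have -> : M.*2.+1 + (K - M).*2.+1 = K.*2.+2 by lia.
  move: sum_c; rewrite (big_cat_nat (n := M.*2.+1)) /=; try lia.
  rewrite big_nat_recr //= sum_below // c_2M; lia.
have cover_tail : pair_cover M.*2.+1 (K - M).*2 by move=> t ht; apply: cover; lia.
have tail := pair_cover_tight cover_tail sum_tail.
exists M => [|s le_s]; first by rewrite M_pos.
have [lt_s2M|[->|gt_s2M]] : s < M.*2 \/ s = M.*2 \/ M.*2 < s by lia.
- rewrite lt_s2M leqNgt lt_s2M -[s]odd_double_half.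
  case: (odd s) lt_s2M => /= lt_s2M; rewrite ?add1n ?odd_double.
    by apply: odd_below; lia.
  by apply: even_below; lia.
- by rewrite c_2M odd_double leqnn.
- rewrite tail; last lia.
  by rewrite oddB ?odd_double; [case: (odd s) => /=; lia | lia].
Qed.

End PairCover.

Lemma sum_nat_even_odd (d : nat -> bool) N :
  \sum_(0 <= i < N.*2.+1) d i =
  \sum_(0 <= s < N.+1) d s.*2 + \sum_(0 <= s < N.+1) ((0 < s) && d s.*2.-1).
Proof.
elim: N => [|N IH]; first by rewrite !big_nat1 /= addn0.
rewrite doubleS (big_nat_recr N.*2.+2) // (big_nat_recr N.*2.+1) // IH /=.
rewrite (big_nat_recr N.+1) //= (big_nat_recr N.+1) //= doubleS /=; lia.
Qed.

Section OddPath.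
Variables (n N : nat).
Hypothesis n_odd : n = N.*2.+1.
Implicit Type D : {set 'I_n}.

Definition indic D (i : nat) : bool := [exists x in D, val x == i].

Lemma indicE D (x : 'I_n) : indic D x = (x \in D).
Proof.
apply/existsP/idP => [[y /andP[yD /eqP y_x]]|xD]; last by exists x; rewrite xD eqxx.
by rewrite -(val_inj y_x).
Qed.

Lemma indic_oob D i : n <= i -> indic D i = false.
Proof.
move=> le_ni; apply/existsP => -[y /andP[_ /eqP y_i]].
by move: (ltn_ord y); rewrite y_i ltnNge le_ni.
Qed.

Lemma card_indic D : #|D| = \sum_(0 <= i < n) indic D i.
Proof.
by rewrite big_mkord -sum1_card big_mkcond; apply: eq_bigr => x _; rewrite indicE.
Qed.

Lemma tds_neighbour D : is_tds D -> forall v, v < n -> (0 < v) && indic D v.-1 || indic D v.+1.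
Proof.
move=> /forallP tds v lt_vn; have /existsP[u /andP[uD]] := tds (Ordinal lt_vn).
by rewrite /path_adj /= => /orP[/eqP ->|/eqP <-]; rewrite indicE uD ?orbT.
Qed.

(* [odd_part D s] is the membership of vertex 2s-1; positions 0 and N+1 are
   padding and always false. *)
Definition even_part D s := indic D s.*2.
Definition odd_part D s := (0 < s) && indic D s.*2.-1.

Lemma card_even_odd D :
  #|D| = \sum_(0 <= s < N.+1) even_part D s + \sum_(0 <= s < N.+2) odd_part D s.
Proof.
rewrite card_indic n_odd sum_nat_even_odd (big_nat_recr N.+1) //=.
by rewrite /odd_part indic_oob ?andbF ?addn0 // n_odd doubleS.
Qed.

Lemma tds_even_cover D : is_tds D -> pair_cover (even_part D) 0 N.
Proof.
move=> tds t lt_tN; have := tds_neighbour tds (v := t.*2.+1).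
by rewrite /even_part doubleS; apply; lia.
Qed.

Lemma tds_odd_cover D : is_tds D -> pair_cover (odd_part D) 0 N.+1.
Proof.
move=> tds t lt_tN; have := tds_neighbour tds (v := t.*2).
by rewrite /odd_part doubleS double_gt0; apply; lia.
Qed.

Lemma odd_part_last D : odd_part D N.+1 = false.
Proof. by rewrite /odd_part indic_oob ?andbF // n_odd doubleS. Qed.

Lemma tds_card_ge D : is_tds D -> N.+1 %/ 2 + N.+2 %/ 2 <= #|D|.
Proof.
move=> tds; rewrite card_even_odd; apply: leq_add.
  exact: pair_cover_sum_ge (tds_even_cover tds).
exact: pair_cover_sum_ge (tds_odd_cover tds).
Qed.

End OddPath.

Lemma nat_mod4_cases x :
  exists q, [\/ x = 4 * q, x = (4 * q).+1, x = (4 * q).+2 | x = (4 * q).+3].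
Proof.
exists (x %/ 4); have := ltn_pmod x (isT : 0 < 4).
case: (x %% 4) (divn_eq x 4) => [|[|[|[|r]]]] x_eq lt_r4;
  [constructor 1 | constructor 2 | constructor 3 | constructor 4 | ]; lia.
Qed.

Definition min_tds_mem (m i : nat) : bool :=
  match i %% 4 with 0 => false | 1 => i %/ 4 <= m | 2 => true | _ => m <= i %/ 4 end.


Lemma min_tds_mem0 m q : min_tds_mem m (4 * q) = false.
Proof. by rewrite /min_tds_mem (_ : 4 * q %% 4 = 0); last lia. Qed.

Lemma min_tds_mem1 m q : min_tds_mem m (4 * q).+1 = (q <= m).
Proof.
rewrite /min_tds_mem; have -> : (4 * q).+1 %% 4 = 1 by lia.
by have -> : (4 * q).+1 %/ 4 = q by lia.
Qed.

Lemma min_tds_mem2 m q : min_tds_mem m (4 * q).+2 = true.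
Proof. by rewrite /min_tds_mem (_ : (4 * q).+2 %% 4 = 2); last lia. Qed.

Lemma min_tds_mem3 m q : min_tds_mem m (4 * q).+3 = (m <= q).
Proof.
rewrite /min_tds_mem; have -> : (4 * q).+3 %% 4 = 3 by lia.
by have -> : (4 * q).+3 %/ 4 = q by lia.
Qed.

Section Path4k1.
Variable k : nat.
Hypothesis k_gt0 : 0 < k.
Local Notation n := (4 * k + 1).

Let n_odd : n = k.*2.*2.+1. Proof. lia. Qed.

Definition min_tds m : {set 'I_n} := [set x : 'I_n | min_tds_mem m x].

Lemma indic_min_tds m i : indic (min_tds m) i = (i < n) && min_tds_mem m i.
Proof.
case: (ltnP i n) => [lt_in|le_ni]; last exact: indic_oob.
by rewrite -[i]/(nat_of_ord (Ordinal lt_in)) indicE inE.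
Qed.

Lemma card_min_tds m : m < k -> #|min_tds m| = k.*2.+1.
Proof.
move=> lt_mk; rewrite card_indic.
have sum_blocks K : K <= k ->
    \sum_(0 <= i < 4 * K) indic (min_tds m) i = minn K m.+1 + K + (K - m).
  elim: K => [|K IH] le_Kk; first by rewrite big_geq.
  have -> : 4 * K.+1 = (4 * K).+4 by lia.
  rewrite !big_nat_recr //= IH; last lia.
  rewrite !indic_min_tds min_tds_mem0 min_tds_mem1 min_tds_mem2 min_tds_mem3 andbF.
  have -> : (4 * K).+1 < n by lia.
  have -> : (4 * K).+2 < n by lia.
  have -> : (4 * K).+3 < n by lia.
  by case: (leqP K m) => /=; lia.
rewrite [X in \sum_(_ <= _ < X) _]addn1 big_nat_recr //= sum_blocks //.
by rewrite indic_min_tds min_tds_mem0 andbF; lia.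
Qed.

Lemma min_tds_tds m : m < k -> is_tds (min_tds m).
Proof.
move=> lt_mk; apply/forallP => v; have lt_vn := ltn_ord v.
have adj_mem j : j < n -> min_tds_mem m j -> (v.+1 == j) || (j.+1 == v) ->
    [exists u in min_tds m, path_adj v u].
  by move=> lt_jn mem_j adj; apply/existsP; exists (Ordinal lt_jn); rewrite inE mem_j.
have [q [] v_eq] := nat_mod4_cases v.
- have [le_qm|lt_mq] := leqP q m.
    by apply: (adj_mem (4 * q).+1); rewrite ?min_tds_mem1; lia.
  by apply: (adj_mem (4 * q.-1).+3); rewrite ?min_tds_mem3; lia.
- by apply: (adj_mem (4 * q).+2); rewrite ?min_tds_mem2; lia.
- have [le_qm|lt_mq] := leqP q m.
    by apply: (adj_mem (4 * q).+1); rewrite ?min_tds_mem1; lia.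
  by apply: (adj_mem (4 * q).+3); rewrite ?min_tds_mem3; lia.
- by apply: (adj_mem (4 * q).+2); rewrite ?min_tds_mem2; lia.
Qed.

Lemma tds_card_ge_4k1 (D : {set 'I_n}) : is_tds D -> k.*2.+1 <= #|D|.
Proof. by move/(tds_card_ge n_odd); lia. Qed.

Lemma min_tds_gt m : m < k -> is_gt_set (min_tds m).
Proof.
move=> lt_mk; rewrite /is_gt_set min_tds_tds //; apply/forallP => D.
by apply/implyP => /tds_card_ge_4k1; rewrite card_min_tds.
Qed.

Lemma gt_set_min_tds (D : {set 'I_n}) : is_gt_set D -> exists2 m, m < k & D = min_tds m.
Proof.
case/andP => tds /forallP minimal.
have card_le : #|D| <= k.*2.+1.
  by rewrite -(card_min_tds k_gt0); apply: (implyP (minimal _)); exact: min_tds_tds.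
have even_cover := tds_even_cover n_odd tds.
have odd_cover := tds_odd_cover n_odd tds.
have even_ge := pair_cover_sum_ge even_cover.
have odd_ge := pair_cover_sum_ge odd_cover.
have card_eq := card_even_odd n_odd D.
have even_sum : \sum_(0 <= s < 0 + k.*2.+1) even_part D s = k.
  by move: even_ge odd_ge card_eq card_le; rewrite !add0n; lia.
have odd_sum : \sum_(0 <= s < k.*2.+2) odd_part D s = k.+1.
  by move: even_ge odd_ge card_eq card_le; rewrite !add0n; lia.
have even_alt := pair_cover_tight even_cover even_sum.
have [M M_range odd_switch] :=
  pair_cover_tight_switch (erefl : odd_part D 0 = false) (odd_part_last n_odd D) odd_cover odd_sum.
have indic_even s : s <= k.*2 -> indic D s.*2 = odd s.
  by move=> le_s; rewrite -[indic D _]/(even_part D s) even_alt ?subn0; lia.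
have indic_odd s : 0 < s <= k.*2.+1 ->
    indic D s.*2.-1 = if odd s then s < M.*2 else M.*2 <= s.
  by case/andP => s_gt0 le_s; rewrite -odd_switch // /odd_part s_gt0.
exists M.-1; first lia.
apply/setP => x; rewrite inE -indicE; have lt_xn := ltn_ord x.
have [q [] x_eq] := nat_mod4_cases x; rewrite x_eq.
- by rewrite min_tds_mem0 (_ : 4 * q = q.*2.*2) ?indic_even ?odd_double; lia.
- rewrite min_tds_mem1 (_ : (4 * q).+1 = q.*2.+1.*2.-1) ?indic_odd /=; try lia.
  by rewrite odd_double /=; lia.
- by rewrite min_tds_mem2 (_ : (4 * q).+2 = q.*2.+1.*2) ?indic_even /= ?odd_double; lia.
- rewrite min_tds_mem3 (_ : (4 * q).+3 = q.*2.+2.*2.-1) ?indic_odd /=; try lia.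
  by rewrite odd_double /=; lia.
Qed.

Lemma min_tds_inj : injective (fun m : 'I_k => min_tds m).
Proof.
move=> a b eq_ab; apply: val_inj.
have lt_a : (4 * a).+1 < n by have := ltn_ord a; lia.
have lt_b : (4 * b).+1 < n by have := ltn_ord b; lia.
have := congr1 (fun D : {set 'I_n} => Ordinal lt_a \in D) eq_ab.
have := congr1 (fun D : {set 'I_n} => Ordinal lt_b \in D) eq_ab.
by rewrite !inE /= !min_tds_mem1 !leqnn; lia.
Qed.

Lemma gt_sets_min_tds : [set D | is_gt_set D] = [set min_tds m | m : 'I_k].
Proof.
apply/setP => D; rewrite inE; apply/idP/imsetP => [/gt_set_min_tds[m lt_mk ->]|[m _ ->]].
  by exists (Ordinal lt_mk).
exact: min_tds_gt.
Qed.

Lemma tau_path_4k1 : tau_path n = k.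
Proof.
by rewrite /tau_path gt_sets_min_tds card_imset ?cardsT ?card_ord //; exact: min_tds_inj.
Qed.

Lemma TDV_4k1 (x : 'I_n) : TDV x = \sum_(0 <= m < k) min_tds_mem m x.
Proof.
rewrite /TDV; have -> : [set D | is_gt_set D && (x \in D)] =
    [set min_tds m | m : 'I_k in [set m : 'I_k | min_tds_mem m x]].
  apply/setP => D; rewrite inE; apply/andP/imsetP.
    case=> /gt_set_min_tds[m lt_mk ->] xD; exists (Ordinal lt_mk) => //.
    by rewrite inE; rewrite inE in xD.
  by case=> m; rewrite inE => mem_x ->; split; [exact: min_tds_gt | rewrite inE].
rewrite card_imset; last exact: min_tds_inj.
by rewrite big_mkord -sum1_card big_mkcond; apply: eq_bigr => m _; rewrite inE; case: ifP.
Qed.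

End Path4k1.

Lemma sum_nat_ge a K : \sum_(0 <= m < K) (a <= m) = K - a.
Proof. by elim: K => [|K IH]; [rewrite big_geq | rewrite big_nat_recr //= IH; lia]. Qed.

Lemma sum_nat_le a K : \sum_(0 <= m < K) (m <= a) = minn K a.+1.
Proof. by elim: K => [|K IH]; [rewrite big_geq | rewrite big_nat_recr //= IH; lia]. Qed.

Theorem proposition5p3 (k : nat) (hk : 1 <= k) :
  tau_path (4 * k + 1) = k /\
  forall v : nat, forall hv : (v - 1 < 4 * k + 1), 1 <= v ->
    TDV (Ordinal hv) =
      (if v %% 4 == 0 then v %/ 4
       else if v %% 4 == 1 then 0
       else if v %% 4 == 2 then k - v %/ 4
       else k).
Proof.
split; first exact: tau_path_4k1 hk.
move=> v lt_v v_gt0; rewrite (TDV_4k1 hk) /=.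
have [q [] x_eq] := nat_mod4_cases (v - 1); rewrite x_eq.
- under eq_bigr do rewrite min_tds_mem0.
  by rewrite sum_nat_const_nat muln0 (_ : v %% 4 = 1); last lia.
- under eq_bigr do rewrite min_tds_mem1.
  have -> : v %% 4 = 2 by lia.
  by rewrite sum_nat_ge (_ : v %/ 4 = q); last lia.
- under eq_bigr do rewrite min_tds_mem2.
  by rewrite sum_nat_const_nat muln1 subn0 (_ : v %% 4 = 3); last lia.
- under eq_bigr do rewrite min_tds_mem3.
  have -> : v %% 4 = 0 by lia.
  by rewrite sum_nat_le (_ : v %/ 4 = q.+1) /=; lia.
Qed.
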